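(* Let $\underline{L}$ be a finite lattice and $\underline{S}=[u,v]$ an interval of $\underline{L}$. If $\underline{S}$ is dismantling for $\underline{L}$, then $\underline{L}\setminus\underline{S}$ is a complete sublattice of $\underline{L}$ (i.e. $L\setminus S$ is closed under arbitrary joins and meets taken in $\underline{L}$, including the empty ones, so it contains the top and bottom of $\underline{L}$).
   Context: For $u\le v$ in a lattice $L$, $[u,v]=\{x\mid u\le x\le v\}$, $(v]=\{x\mid x\le v\}$, $[u)=\{x\mid u\le x\}$. An interval $[u,v]$ of $L$ is quasi-dismantling for $L$ if $u$ is supremum-prime in $(v]$ (for all $x,y\in(v]$, $u\le x\vee y$ implies $u\le x$ or $u\le y$) and $v$ is infimum-prime in $[u)$ (for all $x,y\in[u)$, $x\wedge y\le v$ implies $x\le v$ or $y\le v$). It is dismantling for $L$ if moreover $u\neq\bot$ and $v\neq\top$, where $\bot,\top$ are the least and greatest elements of $L$. *)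

From mathcomp Require Import all_boot all_order.
Set Implicit Arguments. Unset Strict Implicit. Unset Printing Implicit Defensive.
Import Order.TTheory.
Local Open Scope order_scope.

(* A finite lattice is modelled as a finTBLatticeType (finite, nonempty
   lattice; such a lattice automatically has \bot and \top). *)

Definition in_itv {d} {L : finTBLatticeType d} (u v x : L) : bool :=
  (u <= x) && (x <= v).

Definition sup_prime_below {d} {L : finTBLatticeType d} (u v : L) : Prop :=
  forall x y : L, x <= v -> y <= v -> u <= x `|` y -> (u <= x) || (u <= y).

Definition inf_prime_above {d} {L : finTBLatticeType d} (u v : L) : Prop :=
  forall x y : L, u <= x -> u <= y -> x `&` y <= v -> (x <= v) || (y <= v).

Definition quasi_dismantling {d} {L : finTBLatticeType d} (u v : L) : Prop :=
  u <= v /\ sup_prime_below u v /\ inf_prime_above u v.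

Definition dismantling {d} {L : finTBLatticeType d} (u v : L) : Prop :=
  quasi_dismantling u v /\ u != \bot /\ v != \top.

From mathcomp Require Import all_boot all_order.
Import Order.TTheory.
Local Open Scope order_scope.

(* If x, y lie outside [u, v] but x `|` y lies inside, then x, y <= v, so
   supremum-primeness of u puts x or y above u, i.e. inside [u, v].
   Dually for meets.  Since u != \bot and v != \top, the empty join and
   meet also lie outside [u, v], and finite joins and meets follow by
   induction. *)

Section DismantlingComplement.

Variables (d : Order.disp_t) (L : finTBLatticeType d) (u v : L).

Lemma notin_itv_bot : u != \bot -> ~~ in_itv u v \bot.
Proof. by move=> u_neq0; rewrite /in_itv lex0 (negbTE u_neq0). Qed.

Lemma notin_itv_top : v != \top -> ~~ in_itv u v \top.
Proof. by move=> v_neq1; rewrite /in_itv le1x (negbTE v_neq1) andbF. Qed.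

Lemma notin_itv_join x y : sup_prime_below u v ->
  ~~ in_itv u v x -> ~~ in_itv u v y -> ~~ in_itv u v (x `|` y).
Proof.
move=> u_prime x_out y_out; apply/negP => /andP[u_le_xy]; rewrite leUx.
move=> /andP[x_le_v y_le_v]; case/orP: (u_prime _ _ x_le_v y_le_v u_le_xy).
- by move=> u_le_x; move: x_out; rewrite /in_itv u_le_x x_le_v.
- by move=> u_le_y; move: y_out; rewrite /in_itv u_le_y y_le_v.
Qed.

Lemma notin_itv_meet x y : inf_prime_above u v ->
  ~~ in_itv u v x -> ~~ in_itv u v y -> ~~ in_itv u v (x `&` y).
Proof.
move=> v_prime x_out y_out; apply/negP => /andP[]; rewrite lexI.
move=> /andP[u_le_x u_le_y] xy_le_v.
case/orP: (v_prime _ _ u_le_x u_le_y xy_le_v).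
- by move=> x_le_v; move: x_out; rewrite /in_itv u_le_x x_le_v.
- by move=> y_le_v; move: y_out; rewrite /in_itv u_le_y y_le_v.
Qed.

End DismantlingComplement.

Theorem corollary1 (d : Order.disp_t) (L : finTBLatticeType d) (u v : L) :
  dismantling u v ->
  forall X : {set L},
    (forall x, x \in X -> ~~ in_itv u v x) ->
    ~~ in_itv u v (\join_(x in X) x) /\ ~~ in_itv u v (\meet_(x in X) x).
Proof.
move=> [[_ [u_prime v_prime]] [u_neq0 v_neq1]] X X_out; split.
- apply: (big_ind (fun y => ~~ in_itv u v y)) => //.
    exact: notin_itv_bot.
  by move=> x y; exact: notin_itv_join.
- apply: (big_ind (fun y => ~~ in_itv u v y)) => //.
    exact: notin_itv_top.
  by move=> x y; exact: notin_itv_meet.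
Qed.
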